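(* Let $\mathcal G$ be a topological $2$-group, $X$ a topological space, $\mathcal U=\{U_i\}_{i\in I}$ an open cover of $X$ and $c=(\mathbf x,\mathbf e)$ a $\mathcal G$-valued Čech cocycle subordinate to $\mathcal U$. Then the functor $\pi_c\colon P_c\to\overline X$ defined below is a principal $\mathcal G$-bundle over $X$ admitting $\mathcal U$ as a trivializing cover.
   Context: Groupoids internal to a category are written $P=(P_1\rightrightarrows P_0)$ with source $s$, target $t$, and product $g*h$ (defined when $t(g)=s(h)$, meaning ''first $g$ then $h$''). A topological $2$-space is a groupoid internal to topological spaces; a topological space $X$ gives $\overline X=(X\rightrightarrows X)$. A topological $2$-group $\mathcal G=(\mathcal G_1\rightrightarrows\mathcal G_0)$ is a groupoid internal to topological groups; then $g*h=h1_{t(g)^{-1}}g$, $\bar g=1_{s(g)}g^{-1}1_{t(g)}$. Let $\mathcal E=\mathrm{Ker}(s)\subset\mathcal G_1$, with $\mathcal G_0$ acting by ${}^xe=1_xe1_{x^{-1}}$. A $\mathcal G$-$2$-space is a topological $2$-space with a continuous strict right action functor of $\mathcal G$; a $\mathcal G$-functor is a $\mathcal G$-equivariant continuous functor; a $\mathcal G$-pseudo-inverse of a $\mathcal G$-functor $f\colon P\to Q$ is a $\mathcal G$-functor $g$ with $\mathcal G_0$-equivariant continuous natural isomorphisms $gf\Rightarrow\mathrm{id}_P$, $\mathrm{id}_Q\Rightarrow fg$; a $\mathcal G$-equivalence is a $\mathcal G$-functor having one. For a continuous functor $\pi\colon P\to\overline X$ from a $\mathcal G$-$2$-space, a trivializing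 chart is $(U,\psi,\phi,\varepsilon)$ with $U\subset X$ open, $\psi\colon P|_U\to\overline U\times\mathcal G$ a $\mathcal G$-equivalence, $\phi$ a $\mathcal G$-pseudo-inverse, $\varepsilon\colon\phi\psi\Rightarrow\mathrm{id}$ a $\mathcal G_0$-equivariant continuous natural isomorphism, with $\mathrm{pr}_1\psi=\pi|_U$ and $\pi|_U\phi=\mathrm{pr}_1$ ($P|_U$ the full subgroupoid on objects over $U$). An atlas is a family of trivializing charts whose $U$'s cover $X$; its cover is a trivializing cover. A principal $\mathcal G$-bundle over $X$ is such a $\pi$ admitting an atlas. Write $U_{i_1\cdots i_n}=U_{i_1}\cap\dots\cap U_{i_n}$. A $\mathcal G$-valued Čech cocycle subordinate to $\mathcal U$ is a pair of families of continuous maps $\mathbf x_{ij}\colon U_{ij}\to\mathcal G_0$, $\mathbf e_{ijk}\colon U_{ijk}\to\mathcal E$ with $t(\mathbf e_{ijk})\mathbf x_{ij}\mathbf x_{jk}=\mathbf x_{ik}$ on $U_{ijk}$ and $\mathbf e_{ikl}\mathbf e_{ijk}=\mathbf e_{ijl}\,{}^{\mathbf x_{ij}}\mathbf e_{jkl}$ on $U_{ijkl}$. The $2$-space $P_c$: $P_0=\coprod_iU_i\times\mathcal G_0$ (elements $(u,x)_i$), $P_1=\coprod_{i,j}U_{ij}\times\mathcal G_1$ (elements $(v,g)_{ij}$), $s((v,g)_{ij})=(v,s(g))_i$, $t((v,g)_{ij})=(v,\mathbf x_{ij}(v)^{-1}t(g))_j$, product $(v,g)_{ij}*(v,h)_{jk}=(v,\mathbf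 e_{ijk}(v)(g*(1_{\mathbf x_{ij}(v)}h)))_{ik}$, units $1_{(u,x)_i}=(u,\mathbf e_{iii}(u)^{-1}1_x)_{ii}$, inverses $\overline{(v,g)_{ij}}=(v,1_{\mathbf x_{ij}(v)^{-1}}\mathbf e_{iji}(v)^{-1}\mathbf e_{iii}(v)^{-1}\bar g)_{ji}$; right action $(u,x)_i\cdot y=(u,xy)_i$, $(v,g)_{ij}\cdot h=(v,gh)_{ij}$; and $\pi_c((u,x)_i)=u$, $\pi_c((v,g)_{ij})=v$. *)

From HB Require Import structures.
From mathcomp Require Import all_boot all_order all_algebra.
From mathcomp Require Import monoid.
From mathcomp Require Import all_classical all_reals topology.

Set Implicit Arguments.
Unset Strict Implicit.
Unset Printing Implicit Defensive.

Local Open Scope classical_set_scope.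
Local Open Scope group_scope.

HB.mixin Record Group_isTopological (G : Type) of Group G & Topological G := {
  mulg_continuous : continuous (fun p : G * G => p.1 * p.2);
  invg_continuous : continuous (fun x : G => x^-1) }.

#[short(type="topGroupType")]
HB.structure Definition TopGroup :=
  {G of Group_isTopological G & Group G & Topological G}.

Definition is_ghom (G H : topGroupType) (f : G -> H) : Prop :=
  forall x y : G, f (x * y) = f x * f y.

(* Objects live in [obD : set O], arrows in [arD : set A]; all structure    *)
(* maps are total functions but only their behaviour on the domains counts. *)
(* [cmp f g] is the product f * g, "first f then g" (defined if tgt f =     *)
(* src g); [inv f] is the inverse arrow.                                    *)

Definition composable {O A : Type} (arD : set A) (src tgt : A -> O) : set (A * A) :=
  [set p | arD p.1 /\ arD p.2 /\ tgt p.1 = src p.2].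

Definition groupoid_ax {O A : Type} (obD : set O) (arD : set A)
  (src tgt : A -> O) (idn : O -> A) (cmp : A -> A -> A) (inv : A -> A) : Prop :=
  (forall f, arD f -> obD (src f) /\ obD (tgt f)) /\
  (forall p, obD p -> arD (idn p)) /\
  (forall f g, composable arD src tgt (f, g) -> arD (cmp f g)) /\
  (forall f, arD f -> arD (inv f)) /\
  (forall p, obD p -> src (idn p) = p /\ tgt (idn p) = p) /\
  (forall f g, composable arD src tgt (f, g) ->
     src (cmp f g) = src f /\ tgt (cmp f g) = tgt g) /\
  (forall f g h, composable arD src tgt (f, g) -> composable arD src tgt (g, h) ->
     cmp (cmp f g) h = cmp f (cmp g h)) /\
  (forall f, arD f -> cmp (idn (src f)) f = f /\ cmp f (idn (tgt f)) = f) /\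
  (forall f, arD f -> src (inv f) = tgt f /\ tgt (inv f) = src f /\
     cmp f (inv f) = idn (src f) /\ cmp (inv f) f = idn (tgt f)).

Definition groupoid_cont {O A : topologicalType} (obD : set O) (arD : set A)
  (src tgt : A -> O) (idn : O -> A) (cmp : A -> A -> A) (inv : A -> A) : Prop :=
  {within arD, continuous src} /\ {within arD, continuous tgt} /\
  {within obD, continuous idn} /\
  {within composable arD src tgt, continuous (fun p : A * A => cmp p.1 p.2)} /\
  {within arD, continuous inv}.

Record top2group := Top2Group {
  G0 : topGroupType;
  G1 : topGroupType;
  gsrc : G1 -> G0;
  gtgt : G1 -> G0;
  gid : G0 -> G1;
  gcomp : G1 -> G1 -> G1;       (* g * h : first g then h *)
  ginv : G1 -> G1 }.

Definition is_top2group (G : top2group) : Prop :=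
  groupoid_ax setT setT (@gsrc G) (@gtgt G) (@gid G) (@gcomp G) (@ginv G) /\
  groupoid_cont setT setT (@gsrc G) (@gtgt G) (@gid G) (@gcomp G) (@ginv G) /\
  is_ghom (@gsrc G) /\ is_ghom (@gtgt G) /\ is_ghom (@gid G) /\ is_ghom (@ginv G) /\
  (forall g h g' h' : G1 G, gtgt g = gsrc h -> gtgt g' = gsrc h' ->
     gcomp (g * g') (h * h') = gcomp g h * gcomp g' h').

(* conjugation action of G0 on E = Ker s :  ^x e = 1_x e 1_{x^-1} *)
Definition gact (G : top2group) (x : G0 G) (e : G1 G) : G1 G :=
  gid x * e * gid x^-1.

(* Objects: the subspace [obD] of [Ob]; arrows: the subspace [arD] of [Ar]. *)

Record sp2 := SP2 {
  Ob : topologicalType; Ar : topologicalType;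
  obD : set Ob; arD : set Ar;
  src : Ar -> Ob; tgt : Ar -> Ob; idn : Ob -> Ar;
  cmp : Ar -> Ar -> Ar; ainv : Ar -> Ar }.

Arguments obD : clear implicits.
Arguments arD : clear implicits.

Definition is_2space (P : sp2) : Prop :=
  groupoid_ax (obD P) (arD P) (@src P) (@tgt P) (@idn P) (@cmp P) (@ainv P) /\
  groupoid_cont (obD P) (arD P) (@src P) (@tgt P) (@idn P) (@cmp P) (@ainv P).

Definition Xbar (X : topologicalType) : sp2 :=
  @SP2 X X setT setT id id id (fun a _ => a) id.

Record fn2 (P Q : sp2) := Fn2 { fob : Ob P -> Ob Q; far : Ar P -> Ar Q }.

Definition fcomp (P Q R : sp2) (F : fn2 P Q) (H : fn2 Q R) : fn2 P R :=
  Fn2 (fun p => fob H (fob F p)) (fun a => far H (far F a)).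

Definition fid (P : sp2) : fn2 P P := Fn2 id id.

Definition is_cfunctor (P Q : sp2) (F : fn2 P Q) : Prop :=
  (forall p, obD P p -> obD Q (fob F p)) /\
  (forall a, arD P a -> arD Q (far F a)) /\
  (forall a, arD P a -> src (far F a) = fob F (src a) /\ tgt (far F a) = fob F (tgt a)) /\
  (forall p, obD P p -> far F (idn p) = idn (fob F p)) /\
  (forall a b, composable (arD P) (@src P) (@tgt P) (a, b) ->
     far F (cmp a b) = cmp (far F a) (far F b)) /\
  {within obD P, continuous (fob F)} /\ {within arD P, continuous (far F)}.

(* continuous natural transformations th : F => F'  (automatically natural *)
(* isomorphisms, all arrows of a groupoid being invertible)               *)
Definition is_natiso (P Q : sp2) (F F' : fn2 P Q) (th : Ob P -> Ar Q) : Prop :=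
  (forall p, obD P p -> arD Q (th p) /\ src (th p) = fob F p /\ tgt (th p) = fob F' p) /\
  (forall a, arD P a -> cmp (far F a) (th (tgt a)) = cmp (th (src a)) (far F' a)) /\
  {within obD P, continuous th}.

Record Gsp2 (G : top2group) := GSP2 {
  gsp :> sp2;
  act0 : Ob gsp -> G0 G -> Ob gsp;
  act1 : Ar gsp -> G1 G -> Ar gsp }.

Definition is_G2space (G : top2group) (P : Gsp2 G) : Prop :=
  is_2space P /\
  (forall p x, obD P p -> obD P (act0 p x)) /\
  (forall a g, arD P a -> arD P (act1 a g)) /\
  (forall a g, arD P a ->
     src (act1 a g) = act0 (src a) (gsrc g) /\ tgt (act1 a g) = act0 (tgt a) (gtgt g)) /\
  (forall p x, obD P p -> act1 (idn p) (gid x) = idn (act0 p x)) /\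
  (forall a b g h, composable (arD P) (@src P) (@tgt P) (a, b) -> gtgt g = gsrc h ->
     act1 (cmp a b) (gcomp g h) = cmp (act1 a g) (act1 b h)) /\
  (forall p, obD P p -> act0 p 1 = p) /\
  (forall p x y, obD P p -> act0 (act0 p x) y = act0 p (x * y)) /\
  (forall a, arD P a -> act1 a 1 = a) /\
  (forall a g h, arD P a -> act1 (act1 a g) h = act1 a (g * h)) /\
  {within obD P `*` setT, continuous (fun q : Ob P * G0 G => act0 q.1 q.2)} /\
  {within arD P `*` setT, continuous (fun q : Ar P * G1 G => act1 q.1 q.2)}.

Definition is_Gfunctor (G : top2group) (P Q : Gsp2 G) (F : fn2 P Q) : Prop :=
  is_cfunctor F /\
  (forall p x, obD P p -> fob F (act0 p x) = act0 (fob F p) x) /\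
  (forall a g, arD P a -> far F (act1 a g) = act1 (far F a) g).

Definition is_G0equivariant (G : top2group) (P Q : Gsp2 G) (th : Ob P -> Ar Q) : Prop :=
  forall p x, obD P p -> th (act0 p x) = act1 (th p) (gid x).

Definition is_Gpseudo_inverse (G : top2group) (P Q : Gsp2 G)
  (f : fn2 P Q) (g : fn2 Q P) : Prop :=
  is_Gfunctor g /\
  exists (th : Ob P -> Ar P) (et : Ob Q -> Ar Q),
    is_natiso (fcomp f g) (fid P) th /\ is_G0equivariant (P:=P) (Q:=P) th /\
    is_natiso (fid Q) (fcomp g f) et /\ is_G0equivariant (P:=Q) (Q:=Q) et.

Definition is_Gequivalence (G : top2group) (P Q : Gsp2 G) (f : fn2 P Q) : Prop :=
  is_Gfunctor f /\ exists g : fn2 Q P, is_Gpseudo_inverse f g.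

Definition restr (X : topologicalType) (G : top2group) (P : Gsp2 G)
  (pi : fn2 P (Xbar X)) (U : set X) : Gsp2 G :=
  @GSP2 G (@SP2 (Ob P) (Ar P)
             (obD P `&` [set p | U (fob pi p)])
             (arD P `&` [set a | U (fob pi (src a)) /\ U (fob pi (tgt a))])
             (@src P) (@tgt P) (@idn P) (@cmp P) (@ainv P))
        (@act0 G P) (@act1 G P).

Definition trivG (X : topologicalType) (G : top2group) (U : set X) : Gsp2 G :=
  @GSP2 G (@SP2 (X * G0 G)%type (X * G1 G)%type (U `*` setT) (U `*` setT)
             (fun a => (a.1, gsrc a.2)) (fun a => (a.1, gtgt a.2))
             (fun p => (p.1, gid p.2)) (fun a b => (a.1, gcomp a.2 b.2))
             (fun a => (a.1, ginv a.2)))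
        (fun p x => (p.1, p.2 * x)) (fun a g => (a.1, a.2 * g)).

Definition is_chart (X : topologicalType) (G : top2group) (P : Gsp2 G)
  (pi : fn2 P (Xbar X)) (U : set X)
  (psi : fn2 (restr pi U) (trivG G U)) (phi : fn2 (trivG G U) (restr pi U))
  (eps : Ob P -> Ar P) : Prop :=
  open U /\
  is_G2space (restr pi U) /\ is_G2space (trivG G U) /\
  is_Gequivalence psi /\ is_Gpseudo_inverse psi phi /\
  is_natiso (fcomp psi phi) (fid (restr pi U)) eps /\
  is_G0equivariant (P:=restr pi U) (Q:=restr pi U) eps /\
  (forall p, obD (restr pi U) p -> (fob psi p).1 = fob pi p) /\
  (forall a, arD (restr pi U) a -> (far psi a).1 = far pi a) /\
  (forall q, obD (trivG G U) q -> fob pi (fob phi q) = q.1) /\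
  (forall b, arD (trivG G U) b -> far pi (far phi b) = b.1).

Definition is_trivializing_cover (X : topologicalType) (G : top2group) (P : Gsp2 G)
  (pi : fn2 P (Xbar X)) (J : Type) (V : J -> set X) : Prop :=
  (forall x : X, exists j, V j x) /\
  (forall j, exists psi phi eps, @is_chart X G P pi (V j) psi phi eps).

Definition is_principal_bundle (X : topologicalType) (G : top2group) (P : Gsp2 G)
  (pi : fn2 P (Xbar X)) : Prop :=
  is_G2space P /\ is_cfunctor pi /\
  exists (J : Type) (V : J -> set X), is_trivializing_cover pi V.

Definition is_cech_cocycle (X : topologicalType) (G : top2group) (I : Type)
  (U : I -> set X) (xx : I -> I -> X -> G0 G) (ee : I -> I -> I -> X -> G1 G) : Prop :=
  (forall i j, {within U i `&` U j, continuous (xx i j)}) /\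
  (forall i j k, {within U i `&` U j `&` U k, continuous (ee i j k)}) /\
  (forall i j k v, (U i `&` U j `&` U k) v -> gsrc (ee i j k v) = 1) /\
  (forall i j k v, (U i `&` U j `&` U k) v ->
     gtgt (ee i j k v) * xx i j v * xx j k v = xx i k v) /\
  (forall i j k l v, (U i `&` U j `&` U k `&` U l) v ->
     ee i k l v * ee i j k v = ee i j l v * gact (xx i j v) (ee j k l v)).

(* P_0 = coprod_i U_i x G_0, realised as the open subspace                  *)
(* {((i,u),x) | u in U_i} of I_discrete x X x G_0;                          *)
(* P_1 = coprod_{i,j} U_ij x G_1, realised as {(((i,j),v),g) | v in U_ij}.   *)
Definition Pc (X : topologicalType) (G : top2group) (I : choiceType)
  (U : I -> set X) (xx : I -> I -> X -> G0 G) (ee : I -> I -> I -> X -> G1 G) : Gsp2 G :=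
  @GSP2 G
    (@SP2 ((discrete_topology I * X) * G0 G)%type
          ((discrete_topology (I * I) * X) * G1 G)%type
      [set o | U o.1.1 o.1.2]
      [set a | U a.1.1.1 a.1.2 /\ U a.1.1.2 a.1.2]
      (fun a => ((a.1.1.1, a.1.2), gsrc a.2))
      (* t((v,g)_ij) = (v, x_ij(v)^-1 t g)_j *)
      (fun a => ((a.1.1.2, a.1.2), (xx a.1.1.1 a.1.1.2 a.1.2)^-1 * gtgt a.2))
      (* 1_{(u,x)_i} = (u, e_iii(u)^-1 1_x)_ii *)
      (fun o => (((o.1.1, o.1.1), o.1.2), (ee o.1.1 o.1.1 o.1.1 o.1.2)^-1 * gid o.2))
      (* (v,g)_ij * (v,h)_jk = (v, e_ijk(v) (g * (1_{x_ij(v)} h)))_ik *)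
      (fun a b => (((a.1.1.1, b.1.1.2), a.1.2),
                   ee a.1.1.1 a.1.1.2 b.1.1.2 a.1.2 *
                   gcomp a.2 (gid (xx a.1.1.1 a.1.1.2 a.1.2) * b.2)))
      (* inverse: (v, 1_{x_ij(v)^-1} e_iji(v)^-1 e_iii(v)^-1 \bar g)_ji *)
      (fun a => (((a.1.1.2, a.1.1.1), a.1.2),
                 gid (xx a.1.1.1 a.1.1.2 a.1.2)^-1 *
                 (ee a.1.1.1 a.1.1.2 a.1.1.1 a.1.2)^-1 *
                 (ee a.1.1.1 a.1.1.1 a.1.1.1 a.1.2)^-1 * ginv a.2)))
    (fun o y => (o.1, o.2 * y))
    (fun a h => (a.1, a.2 * h)).

Definition pic (X : topologicalType) (G : top2group) (I : choiceType)
  (U : I -> set X) (xx : I -> I -> X -> G0 G) (ee : I -> I -> I -> X -> G1 G)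
  : fn2 (Pc U xx ee) (Xbar X) :=
  @Fn2 (Pc U xx ee) (Xbar X) (fun o => o.1.2) (fun a => a.1.2).

From HB Require Import structures.
From mathcomp Require Import all_boot all_order all_algebra.
From mathcomp Require Import monoid.
From mathcomp Require Import all_classical all_reals topology.

Set Implicit Arguments.
Unset Strict Implicit.
Unset Printing Implicit Defensive.
Local Open Scope classical_set_scope.
Local Open Scope group_scope.

(* P_c is glued from the trivial pieces U_i x G: an arrow (v,g)_ij is read in
   the i-th sheet, its target is moved to the j-th sheet by x_ij(v), and
   composites are corrected by e_ijk(v).  The cocycle identities are exactly
   what makes this composition associative and unital.  Every groupoid law
   reduces to an identity in the group G_1, using g * h = g 1_{t g}^-1 h and
   the Peiffer identity (Ker s and Ker t commute).
   Over U_i, the chart (u,x)_k |-> (u, x_ik(u) x), (v,g)_kl |-> (v, e_ikl(v)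
   1_{x_ik(v)} g) is a G-equivalence; its pseudo-inverse embeds U_i x G as the
   i-th sheet, and the natural isomorphisms are the arrows 1_{x_ik(u) x} and
   e_iii(u)^-1 1_x.  As P_0 and P_1 are sums over the discrete index set,
   continuity is checked sheet by sheet, where every map is a formula in x_ij,
   e_ijk and the structure maps of G. *)

Section WithinContinuity.
Context {T U V : topologicalType}.

Lemma within_continuous_pair (A : set T) (f : T -> U) (g : T -> V) :
  {within A, continuous f} -> {within A, continuous g} ->
  {within A, continuous (fun x => (f x, g x))}.
Proof.
move=> /subspace_continuousP cf /subspace_continuousP cg.
by apply/subspace_continuousP => x Ax; exact: cvg_pair (cf x Ax) (cg x Ax).
Qed.

Lemma within_continuous_comp_into (A : set T) (B : set U) (f : T -> U) (g : U -> V) :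
  {within A, continuous f} -> (forall x, A x -> B (f x)) ->
  {within B, continuous g} -> {within A, continuous (fun x => g (f x))}.
Proof.
move=> /subspace_continuousP cf AB /subspace_continuousP cg.
apply/subspace_continuousP => x Ax.
have fAB : f @ within A (nbhs x) --> within B (nbhs (f x)).
  move=> P BP; have := cf x Ax (fun y => B y -> P y) BP.
  rewrite !nbhs_simpl /= /within /=.
  by apply: filterS => y BPy Ay; apply: BPy => //; exact: AB.
exact: cvg_comp fAB (cg (f x) (AB x Ax)).
Qed.

Lemma continuous_comp_within (A : set T) (f : T -> U) (g : U -> V) :
  {within A, continuous f} -> continuous g ->
  {within A, continuous (fun x => g (f x))}.
Proof.
move=> cf /continuous_subspace_setT cg.
exact: within_continuous_comp_into cf _ cg.
Qed.

Lemma within_continuous_fibres (K : choiceType) (A : set T) (f : T -> U)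
    (k : T -> discrete_topology K) :
  continuous k -> (forall c, {within A `&` [set x | k x = c], continuous f}) ->
  {within A, continuous f}.
Proof.
move=> ck cf; apply/subspace_continuousP => x Ax.
have kx : nbhs x [set y | k y = k x] := ck x [set k x] (discrete_set1 _).
have /subspace_continuousP /(_ x (conj Ax erefl)) := cf (k x).
apply: cvg_trans; apply: cvg_app => P; rewrite !nbhs_simpl /= /within /=.
by apply: filterS2 kx => y kyx AkP Ay; exact: AkP.
Qed.

Lemma within_continuous_fibrewise (K : choiceType) (A : set T) (f : T -> U)
    (k : T -> discrete_topology K) (F : K -> T -> U) :
  continuous k -> (forall x, A x -> f x = F (k x) x) ->
  (forall c, {within A `&` [set x | k x = c], continuous (F c)}) ->
  {within A, continuous f}.
Proof.
move=> ck fF cF; apply: within_continuous_fibres ck _ => c.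
apply: subspace_eq_continuous (cF c) => x; rewrite inE => -[Ax <-].
exact/esym/fF.
Qed.

End WithinContinuity.

Section WithinContinuityCombinators.
Context {T U V : topologicalType}.

Lemma within_continuous_cst (A : set T) (c : U) : {within A, continuous (fun=> c)}.
Proof. exact/continuous_subspaceT/cst_continuous. Qed.

Lemma within_continuous_id (A : set T) : {within A, continuous (fun x => x)}.
Proof. by apply: continuous_subspaceT => x; exact: cvg_id. Qed.

Lemma within_continuous_fst (A : set T) (f : T -> U * V) :
  {within A, continuous f} -> {within A, continuous (fun x => (f x).1)}.
Proof. by move=> cf; apply: continuous_comp_within cf _ => p; exact: cvg_fst. Qed.

Lemma within_continuous_snd (A : set T) (f : T -> U * V) :
  {within A, continuous f} -> {within A, continuous (fun x => (f x).2)}.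
Proof. by move=> cf; apply: continuous_comp_within cf _ => p; exact: cvg_snd. Qed.

Lemma within_continuous_mulg {H : topGroupType} (A : set T) (f g : T -> H) :
  {within A, continuous f} -> {within A, continuous g} ->
  {within A, continuous (fun x => f x * g x)}.
Proof.
move=> cf cg.
exact: (continuous_comp_within (within_continuous_pair cf cg) mulg_continuous).
Qed.

Lemma within_continuous_invg {H : topGroupType} (A : set T) (f : T -> H) :
  {within A, continuous f} -> {within A, continuous (fun x => (f x)^-1)}.
Proof. by move=> cf; exact: (continuous_comp_within cf invg_continuous). Qed.

End WithinContinuityCombinators.

Ltac gsimpl :=
  rewrite ?(invgM, invgK, invg1, mulgA, mulgK, mulgVK, mulgV, mulVg, mul1g, mulg1).

Section GroupHomomorphism.
Variables (A B : topGroupType) (f : A -> B).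
Hypothesis fM : is_ghom f.

Lemma ghom1 : f 1 = 1.
Proof. by apply: (@mulIg _ (f 1)); rewrite mul1g -fM mul1g. Qed.

Lemma ghomV x : f x^-1 = (f x)^-1.
Proof. by apply: (@mulIg _ (f x)); rewrite mulVg -fM mulVg ghom1. Qed.

End GroupHomomorphism.

Section TwoGroupAlgebra.
Variable G : top2group.
Hypothesis HG : is_top2group G.
Local Notation s := (@gsrc G).
Local Notation t := (@gtgt G).
Local Notation u := (@gid G).
Local Notation c := (@gcomp G).

Lemma gsrcM : is_ghom s. Proof. by case: HG => _ [_ [sM _]]. Qed.
Lemma gtgtM : is_ghom t. Proof. by case: HG => _ [_ [_ [tM _]]]. Qed.
Lemma gidM : is_ghom u. Proof. by case: HG => _ [_ [_ [_ [uM _]]]]. Qed.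

Lemma gsrc1 : s 1 = 1. Proof. exact/ghom1/gsrcM. Qed.
Lemma gtgt1 : t 1 = 1. Proof. exact/ghom1/gtgtM. Qed.
Lemma gid1 : u 1 = 1. Proof. exact/ghom1/gidM. Qed.
Lemma gsrcV g : s g^-1 = (s g)^-1. Proof. exact/ghomV/gsrcM. Qed.
Lemma gtgtV g : t g^-1 = (t g)^-1. Proof. exact/ghomV/gtgtM. Qed.
Lemma gidV x : u x^-1 = (u x)^-1. Proof. exact/ghomV/gidM. Qed.

Lemma gsrc_gid x : s (u x) = x.
Proof. by case: HG => [[_ [_ [_ [_ [idP _]]]]] _]; case: (idP x I). Qed.

Lemma gtgt_gid x : t (u x) = x.
Proof. by case: HG => [[_ [_ [_ [_ [idP _]]]]] _]; case: (idP x I). Qed.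

Lemma gcomp_gidl h : c (u (s h)) h = h.
Proof. by case: HG => [[_ [_ [_ [_ [_ [_ [_ [unitP _]]]]]]]] _]; case: (unitP h I). Qed.

Lemma gcomp_gidr g : c g (u (t g)) = g.
Proof. by case: HG => [[_ [_ [_ [_ [_ [_ [_ [unitP _]]]]]]]] _]; case: (unitP g I). Qed.

Lemma gcomp_interchange g h g' h' : t g = s h -> t g' = s h' ->
  c (g * g') (h * h') = c g h * c g' h'.
Proof. by case: HG => _ [_ [_ [_ [_ [_ interchange]]]]]; exact: interchange. Qed.

Lemma gcompE g h : t g = s h -> c g h = g * (u (t g))^-1 * h.
Proof.
move=> tg_sh; set a := g * (u (t g))^-1.
have ta : t a = 1 by rewrite /a gtgtM gtgtV gtgt_gid mulgV.
have -> : c g h = c (a * u (t g)) (1 * h) by rewrite /a mulgVK mul1g.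
rewrite gcomp_interchange ?gtgt_gid ?ta ?gsrc1 //.
have -> : c a 1 = a by rewrite -gid1 -ta gcomp_gidr.
by rewrite tg_sh gcomp_gidl.
Qed.

Lemma gcompE_gid g h x : x^-1 * t g = s h -> c g (u x * h) = g * (u (s h))^-1 * h.
Proof.
move=> tg_sh; have tg : t g = x * s h by rewrite -tg_sh mulVKg.
by rewrite gcompE ?gsrcM ?gsrc_gid // tg gidM invgM !mulgA mulgVK.
Qed.

Lemma ginvE g : ginv g = u (t g) * g^-1 * u (s g).
Proof.
case: HG => [[_ [_ [_ [_ [_ [_ [_ [_ invP]]]]]]]] _]; case: (invP g I) => sg [_ [gginv _]].
move: gginv; rewrite gcompE ?sg // => <-.
by rewrite !mulgA mulgVK mulgV mul1g.
Qed.

Lemma peiffer e k : s e = 1 -> t k = 1 -> e * k = k * e.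
Proof.
move=> se tk.
have ck1 : c k 1 = k by rewrite -gid1 -tk gcomp_gidr.
have c1e : c 1 e = e by rewrite -gid1 -se gcomp_gidl.
have ke : c (k * 1) (1 * e) = k * e.
  by rewrite gcomp_interchange ?tk ?gsrc1 ?gtgt1 ?se // ck1 c1e.
have ek : c (1 * k) (e * 1) = e * k.
  by rewrite gcomp_interchange ?tk ?gsrc1 ?gtgt1 ?se // ck1 c1e.
by rewrite -ek -ke !mulg1 !mul1g.
Qed.

Lemma conj_ker_gsrc w e : s e = 1 -> w * e * w^-1 = u (t w) * e * (u (t w))^-1.
Proof.
move=> se; set y := u (t w); set k := w * y^-1.
have tk : t k = 1 by rewrite /k /y gtgtM gtgtV gtgt_gid mulgV.
set z := y * e * y^-1.
have sz : s z = 1 by rewrite /z /y !gsrcM gsrcV gsrc_gid se mulg1 mulgV.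
have -> : w = k * y by rewrite /k mulgVK.
rewrite invgM !mulgA.
have -> : k * y * e * y^-1 * k^-1 = k * z * k^-1 by rewrite /z !mulgA.
by rewrite -(peiffer sz tk) mulgK.
Qed.

Lemma mul_ker_gsrc w e : s e = 1 -> w * e = u (t w) * e * (u (t w))^-1 * w.
Proof. by move=> se; rewrite -conj_ker_gsrc // mulgVK. Qed.

(* Compatibility of the action of G with the composition of P_c. *)
Lemma gcomp_act e a b g h x : x^-1 * t a = s b -> t g = s h ->
  (e * c a (u x * b)) * c g h = e * c (a * g) (u x * (b * h)).
Proof.
move=> ta_sb tg_sh.
have tag_sbh : x^-1 * t (a * g) = s (b * h) by rewrite gtgtM gsrcM mulgA ta_sb tg_sh.
rewrite (gcompE_gid ta_sb) (gcompE_gid tag_sbh) (gcompE tg_sh) gsrcM gidM.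
set k := (u (s b))^-1 * b; set w := g * (u (t g))^-1.
have sk : s k = 1 by rewrite /k gsrcM gsrcV gsrc_gid mulVg.
have tw : t w = 1 by rewrite /w gtgtM gtgtV gtgt_gid mulgV.
transitivity (e * a * (k * w) * h); first by rewrite /k /w; gsimpl.
by rewrite (peiffer sk tw) /k /w tg_sh; gsimpl.
Qed.

Section CocycleAlgebra.
Variables (X : topologicalType) (I : Type) (U : I -> set X)
  (xx : I -> I -> X -> G0 G) (ee : I -> I -> I -> X -> G1 G).
Hypothesis HC : is_cech_cocycle U xx ee.
Variable v : X.

(* The G_1-components of the structure maps of P_c over the point v. *)
Local Notation pid i x := ((ee i i i v)^-1 * u x).
Local Notation ptgt i j g := ((xx i j v)^-1 * t g).
Local Notation pcomp i j k g h := (ee i j k v * c g (u (xx i j v) * h)).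
Local Notation pinv i j g :=
  (u (xx i j v)^-1 * (ee i j i v)^-1 * (ee i i i v)^-1 * ginv g).
(* The G_1-component of the chart psi_i : P_c|U_i -> U_i x G on arrows. *)
Local Notation pchart i j k g := (ee i j k v * u (xx i j v) * g).

Lemma cocycle_gsrc i j k : U i v -> U j v -> U k v -> s (ee i j k v) = 1.
Proof. by case: HC => _ [_ [ker _]] *; exact: ker. Qed.

Lemma cocycle_gtgt i j k : U i v -> U j v -> U k v ->
  t (ee i j k v) * xx i j v * xx j k v = xx i k v.
Proof. by case: HC => _ [_ [_ [tgt _]]] *; exact: tgt. Qed.

Lemma cocycle_assoc i j k l : U i v -> U j v -> U k v -> U l v ->
  ee i k l v * ee i j k v = ee i j l v * (u (xx i j v) * ee j k l v * (u (xx i j v))^-1).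
Proof. by case: HC => _ [_ [_ [_ assoc]]] *; rewrite -gidV; exact: assoc. Qed.

Section Sheets.
Variables (i j k l : I) (Ui : U i v) (Uj : U j v) (Uk : U k v) (Ul : U l v).

Lemma cocycle_xii : (t (ee i i i v))^-1 = xx i i v.
Proof.
apply: (@mulgI _ (t (ee i i i v))); apply: (@mulIg _ (xx i i v)).
by rewrite mulgV mul1g cocycle_gtgt.
Qed.

Lemma cocycle_eiij : ee i i j v = ee i i i v.
Proof.
have eiii : ee i i i v = u (xx i i v) * ee i i j v * (u (xx i i v))^-1.
  by apply: (@mulgI _ (ee i i j v)); rewrite cocycle_assoc.
have xii : xx i i v = t (ee i i i v)^-1 by rewrite gtgtV cocycle_xii.
move: eiii; rewrite xii -conj_ker_gsrc ?cocycle_gsrc // invgK => eiii.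
apply: (@mulIg _ (ee i i i v)); symmetry.
by rewrite {2}eiii !mulgA mulgV mul1g.
Qed.

Lemma cocycle_eijj : ee i j j v = u (xx i j v) * ee j j j v * (u (xx i j v))^-1.
Proof. by apply: (@mulgI _ (ee i j j v)); rewrite cocycle_assoc. Qed.

Lemma Pc_gsrc_id x : s (pid i x) = x.
Proof. by rewrite gsrcM gsrcV gsrc_gid cocycle_gsrc //; gsimpl. Qed.

Lemma Pc_gtgt_id x : ptgt i i (pid i x) = x.
Proof. by rewrite gtgtM gtgtV gtgt_gid cocycle_xii; gsimpl. Qed.

Lemma Pc_gsrc_comp g h : ptgt i j g = s h -> s (pcomp i j k g h) = s g.
Proof.
by move=> gh; rewrite gcompE_gid // !gsrcM gsrcV gsrc_gid cocycle_gsrc //; gsimpl.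
Qed.

Lemma Pc_gtgt_comp g h : ptgt i j g = s h -> ptgt i k (pcomp i j k g h) = ptgt j k h.
Proof.
move=> gh; have tg : t g = xx i j v * s h by rewrite -gh mulVKg.
by rewrite gcompE_gid // !gtgtM gtgtV gtgt_gid tg -(cocycle_gtgt Ui Uj Uk); gsimpl.
Qed.

Lemma Pc_comp_idl g : pcomp i i j (pid i (s g)) g = g.
Proof.
rewrite gcompE_gid; last by rewrite gtgtM gtgtV gtgt_gid cocycle_xii; gsimpl.
by rewrite cocycle_eiij //; gsimpl.
Qed.

Lemma Pc_comp_idr g : pcomp i j j g (pid j (ptgt i j g)) = g.
Proof.
rewrite gcompE_gid; last by rewrite gsrcM gsrcV gsrc_gid cocycle_gsrc //; gsimpl.
rewrite gsrcM gsrcV gsrc_gid cocycle_gsrc //; gsimpl.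
set y := ptgt i j g; set w := g * (u y)^-1.
have tw : t w = xx i j v by rewrite /w gtgtM gtgtV gtgt_gid /y; gsimpl.
have wE : w * (ee j j j v)^-1 = u (xx i j v) * (ee j j j v)^-1 * (u (xx i j v))^-1 * w.
  by rewrite mul_ker_gsrc ?gsrcV ?cocycle_gsrc ?invg1 // tw.
transitivity (ee i j j v * (w * (ee j j j v)^-1) * u y); first by rewrite /w; gsimpl.
by rewrite wE cocycle_eijj // /w; gsimpl.
Qed.

Lemma Pc_gsrc_inv g : s (pinv i j g) = ptgt i j g.
Proof. by rewrite ginvE // !gsrcM !gsrcV !gsrc_gid !cocycle_gsrc //; gsimpl. Qed.

Lemma Pc_gtgt_inv g : ptgt j i (pinv i j g) = s g.
Proof.
by rewrite ginvE // !gtgtM !gtgtV !gtgt_gid cocycle_xii -(cocycle_gtgt Ui Uj Ui); gsimpl.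
Qed.

Lemma Pc_comp_invr g : pcomp i j i g (pinv i j g) = pid i (s g).
Proof.
rewrite gcompE_gid; last by rewrite Pc_gsrc_inv.
rewrite Pc_gsrc_inv ginvE //.
set E := (ee i j i v)^-1 * (ee i i i v)^-1; set w := g * (u (t g))^-1.
have tw : t w = 1 by rewrite /w gtgtM gtgtV gtgt_gid mulgV.
have sE : s E = 1 by rewrite /E gsrcM !gsrcV !cocycle_gsrc //; gsimpl.
have wE : w * E = E * w by rewrite mul_ker_gsrc // tw gid1; gsimpl.
transitivity (ee i j i v * (w * E) * (u (t g) * g^-1 * u (s g))).
  by rewrite /w /E !gidM !gidV; gsimpl.
by rewrite wE /w /E; gsimpl.
Qed.

Lemma Pc_comp_invl g : pcomp j i j (pinv i j g) g = pid j (ptgt i j g).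
Proof.
rewrite gcompE_gid; last by rewrite Pc_gtgt_inv.
have eiii_eiji : ee i i i v * ee i j i v =
    u (xx i j v) * ee j j j v * ee j i j v * (u (xx i j v))^-1.
  by rewrite -{1}cocycle_eiij cocycle_assoc // cocycle_eijj //; gsimpl.
have inv_eiji_eiii : (ee i j i v)^-1 * (ee i i i v)^-1 =
    u (xx i j v) * (ee j i j v)^-1 * (ee j j j v)^-1 * (u (xx i j v))^-1.
  by rewrite -invgM eiii_eiji; gsimpl.
transitivity (ee j i j v * (u (xx i j v))^-1 *
   ((ee i j i v)^-1 * (ee i i i v)^-1) * u (t g)).
  by rewrite ginvE // gidV; gsimpl.
by rewrite inv_eiji_eiii gidM gidV; gsimpl.
Qed.

Lemma chart_gsrc g : s (pchart i j k g) = xx i j v * s g.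
Proof. by rewrite !gsrcM gsrc_gid cocycle_gsrc //; gsimpl. Qed.

Lemma chart_gtgt g : t (pchart i j k g) = xx i k v * ptgt j k g.
Proof. by rewrite !gtgtM gtgt_gid -(cocycle_gtgt Ui Uj Uk); gsimpl. Qed.

Lemma chart_id x : pchart i j j (pid j x) = u (xx i j v * x).
Proof. by rewrite cocycle_eijj // gidM; gsimpl. Qed.

Lemma chart_phi_comp g h : t g = s h ->
  (ee i i i v)^-1 * c g h = pcomp i i i ((ee i i i v)^-1 * g) ((ee i i i v)^-1 * h).
Proof.
move=> gh.
rewrite gcompE_gid; last first.
  by rewrite gtgtM gtgtV cocycle_xii !gsrcM gsrcV cocycle_gsrc // gh; gsimpl.
rewrite (gcompE gh) !gsrcM gsrcV cocycle_gsrc //; gsimpl.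
set w := g * (u (s h))^-1.
have tw : t w = 1 by rewrite /w gtgtM gtgtV gtgt_gid gh mulgV.
have se : s (ee i i i v)^-1 = 1 by rewrite gsrcV cocycle_gsrc // invg1.
transitivity ((ee i i i v)^-1 * w * h); first by rewrite /w gh; gsimpl.
by rewrite -(peiffer se tw) /w; gsimpl.
Qed.

Lemma chart_eta_natural g :
  c g (pid i (t g)) = c (pid i (s g)) (pchart i i i ((ee i i i v)^-1 * g)).
Proof.
rewrite gcompE; last by rewrite gsrcM gsrcV cocycle_gsrc // gsrc_gid; gsimpl.
rewrite gcompE; last first.
  by rewrite gtgtM gtgtV cocycle_xii gtgt_gid !gsrcM gsrcV cocycle_gsrc // gsrc_gid; gsimpl.
rewrite gtgtM gtgtV cocycle_xii gtgt_gid.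
set e := ee i i i v; set w := g * (u (t g))^-1.
have tw : t w = 1 by rewrite /w gtgtM gtgtV gtgt_gid mulgV.
have se : s e^-1 = 1 by rewrite gsrcV cocycle_gsrc // invg1.
have conj_e : (u (xx i i v))^-1 * e * u (xx i i v) = e.
  by rewrite -cocycle_xii gidV invgK -conj_ker_gsrc ?cocycle_gsrc //; gsimpl.
transitivity (w * e^-1 * u (t g)); first by rewrite /w; gsimpl.
rewrite -(peiffer se tw) /w.
transitivity (e^-1 * g); first by gsimpl.
transitivity (e^-1 * ((u (xx i i v))^-1 * e * u (xx i i v)) * e^-1 * g).
  by rewrite conj_e; gsimpl.
by rewrite gidM; gsimpl.
Qed.

End Sheets.

Lemma chart_eps_natural i j k g : U i v -> U j v -> U k v ->
  pcomp i i k ((ee i i i v)^-1 * pchart i j k g) (u (xx i k v * ptgt j k g)) =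
  pcomp i j k (u (xx i j v * s g)) g.
Proof.
move=> Ui Uj Uk.
have tgt_chart : t ((ee i i i v)^-1 * pchart i j k g) = xx i i v * (xx i k v * ptgt j k g).
  by rewrite gtgtM gtgtV (cocycle_xii Ui) (chart_gtgt Ui Uj Uk).
rewrite gcompE; last by rewrite tgt_chart !gsrcM !gsrc_gid.
rewrite gcompE; last by rewrite gtgt_gid gsrcM gsrc_gid.
rewrite (cocycle_eiij Ui Uk) tgt_chart !gtgt_gid !gidM !gidV.
by rewrite mulgVK mulVKg mulgV mul1g mulgA.
Qed.

Lemma Pc_comp_assoc i j k l g h m : U i v -> U j v -> U k v -> U l v ->
  ptgt i j g = s h -> ptgt j k h = s m ->
  pcomp i k l (pcomp i j k g h) m = pcomp i j l g (pcomp j k l h m).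
Proof.
move=> Ui Uj Uk Ul gh hm.
have gh_m : ptgt i k (pcomp i j k g h) = s m by rewrite (Pc_gtgt_comp Ui Uj Uk).
have g_hm : ptgt i j g = s (pcomp j k l h m) by rewrite (Pc_gsrc_comp Uj Uk Ul).
rewrite (gcompE_gid gh_m) (gcompE_gid g_hm) (Pc_gsrc_comp Uj Uk Ul hm).
rewrite (gcompE_gid gh) (gcompE_gid hm).
set w := g * (u (s h))^-1; set r := h * (u (s m))^-1 * m.
have tw : t w = xx i j v.
  by rewrite /w gtgtM gtgtV gtgt_gid -gh; gsimpl.
have wE : w * ee j k l v = u (xx i j v) * ee j k l v * (u (xx i j v))^-1 * w.
  by rewrite mul_ker_gsrc ?cocycle_gsrc // tw.
transitivity (ee i k l v * ee i j k v * w * r); first by rewrite /w /r; gsimpl.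
transitivity (ee i j l v * (w * ee j k l v) * r); last by rewrite /w /r; gsimpl.
by rewrite cocycle_assoc // wE; gsimpl.
Qed.

Lemma chart_comp i j k l g h : U i v -> U j v -> U k v -> U l v ->
  ptgt j k g = s h ->
  pchart i j l (pcomp j k l g h) = c (pchart i j k g) (pchart i k l h).
Proof.
move=> Ui Uj Uk Ul gh; have tg : t g = xx j k v * s h by rewrite -gh mulVKg.
rewrite [RHS]gcompE; last by rewrite (chart_gtgt Ui Uj Uk) (chart_gsrc Ui Uk Ul) gh; gsimpl.
rewrite (chart_gtgt Ui Uj Uk) (gcompE_gid gh) gh.
set w := u (xx i j v) * g * (u (s h))^-1.
set z := (u (xx i k v))^-1 * ee i k l v * u (xx i k v).
have tw : t w = xx i j v * xx j k v by rewrite /w !gtgtM gtgtV !gtgt_gid tg; gsimpl.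
have sz : s z = 1 by rewrite /z !gsrcM gsrcV gsrc_gid cocycle_gsrc //; gsimpl.
have conj_z : u (xx i j v * xx j k v) * z * (u (xx i j v * xx j k v))^-1 =
    (ee i j k v)^-1 * ee i k l v * ee i j k v.
  have te : t (ee i j k v) = xx i k v * (xx i j v * xx j k v)^-1.
    by rewrite -(cocycle_gtgt Ui Uj Uk); gsimpl.
  rewrite -[X in _ = _ * X](invgK (ee i j k v)).
  rewrite [RHS]conj_ker_gsrc ?gsrcV ?cocycle_gsrc ?invg1 //.
  by rewrite gtgtV te /z; gsimpl; rewrite !gidM !gidV; gsimpl.
transitivity (ee i j k v * (w * z) * h); last by rewrite /w /z ?gidM ?gidV; gsimpl.
rewrite (mul_ker_gsrc w sz) tw conj_z.
transitivity (ee i k l v * ee i j k v * w * h); last by gsimpl.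
by rewrite cocycle_assoc // /w; gsimpl.
Qed.

End CocycleAlgebra.

End TwoGroupAlgebra.

Section TwoGroupContinuity.
Variable G : top2group.
Hypothesis HG : is_top2group G.
Context {T : topologicalType}.
Local Notation s := (@gsrc G).
Local Notation t := (@gtgt G).

Let HGcont : groupoid_cont setT setT s t (@gid G) (@gcomp G) (@ginv G).
Proof. by case: HG => _ []. Qed.

Lemma within_continuous_gsrc (A : set T) (f : T -> G1 G) :
  {within A, continuous f} -> {within A, continuous (fun x => s (f x))}.
Proof.
move=> cf; apply: continuous_comp_within cf _.
by apply/continuous_subspace_setT; case: HGcont.
Qed.

Lemma within_continuous_gtgt (A : set T) (f : T -> G1 G) :
  {within A, continuous f} -> {within A, continuous (fun x => t (f x))}.
Proof.
move=> cf; apply: continuous_comp_within cf _.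
by apply/continuous_subspace_setT; case: HGcont => _ [].
Qed.

Lemma within_continuous_gid (A : set T) (f : T -> G0 G) :
  {within A, continuous f} -> {within A, continuous (fun x => gid (f x))}.
Proof.
move=> cf; apply: continuous_comp_within cf _.
by apply/continuous_subspace_setT; case: HGcont => _ [_ []].
Qed.

Lemma within_continuous_ginv (A : set T) (f : T -> G1 G) :
  {within A, continuous f} -> {within A, continuous (fun x => ginv (f x))}.
Proof.
move=> cf; apply: continuous_comp_within cf _.
by apply/continuous_subspace_setT; case: HGcont => _ [_ [_ [_]]].
Qed.

Lemma within_continuous_gcomp (A : set T) (f g : T -> G1 G) :
  {within A, continuous f} -> {within A, continuous g} ->
  (forall x, A x -> t (f x) = s (g x)) ->
  {within A, continuous (fun x => gcomp (f x) (g x))}.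
Proof.
move=> cf cg fg; case: HGcont => _ [_ [_ [ccomp _]]].
apply: (within_continuous_comp_into (within_continuous_pair cf cg) _ ccomp).
by move=> x Ax; split=> //; split=> //; exact: fg.
Qed.

End TwoGroupContinuity.

Ltac within_continuity HG :=
  repeat first [ apply: within_continuous_pair | apply: within_continuous_mulg
  | apply: within_continuous_invg | apply: within_continuous_id
  | apply: within_continuous_fst | apply: within_continuous_snd
  | apply: (within_continuous_gsrc HG) | apply: (within_continuous_gtgt HG)
  | apply: (within_continuous_gid HG) | apply: (within_continuous_ginv HG)
  | apply: within_continuous_cst ].

Section Restriction.
Variables (G : top2group) (X : topologicalType) (P : Gsp2 G) (pi : fn2 P (Xbar X)).
Variable W : set X.

Lemma restr_2space : is_2space P -> is_2space (restr pi W).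
Proof.
move=> [[ends [idD [cmpD [invD [idE [cmpE [assoc [unit inv]]]]]]]]].
move=> [cs [ct [cid [ccmp cinv]]]].
have arW : arD (restr pi W) `<=` arD P by move=> a [].
have cmpW : composable (arD (restr pi W)) (@src P) (@tgt P) `<=`
            composable (arD P) (@src P) (@tgt P).
  by move=> [f g] [/arW ? [/arW ? ?]].
split; last first.
  split; first exact: continuous_subspaceW cs.
  split; first exact: continuous_subspaceW ct.
  split; first by apply: continuous_subspaceW cid => p [].
  split; first exact: continuous_subspaceW ccmp.
  exact: continuous_subspaceW cinv.
split; first by move=> f [af [W1 W2]]; have [? ?] := ends f af; split; split.
split.
  by move=> p [op Wp]; have [sp tp] := idE p op; split; [exact: idD | rewrite /= sp tp].
split.
  move=> f g fg; have [sfg tfg] := cmpE f g (cmpW _ fg).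
  have := cmpD f g (cmpW _ fg); case: fg => /= [[af [Wf _]] [[ag [_ Wg]] _]].
  by split=> //=; rewrite sfg tfg.
split.
  move=> f [af [W1 W2]]; have [sf [tf _]] := inv f af.
  by split; [exact: invD | rewrite /= sf tf].
split; first by move=> p [op _]; exact: idE.
split; first by move=> f g /cmpW; exact: cmpE.
split; first by move=> f g h /cmpW fg /cmpW gh; exact: assoc.
split; first by move=> f /arW; exact: unit.
by move=> f /arW; exact: inv.
Qed.

Lemma restr_G2space : is_G2space P ->
  (forall p x, obD P p -> fob pi (act0 p x) = fob pi p) -> is_G2space (restr pi W).
Proof.
move=> [P2 [a0D [a1D [a1E [a1id [a1cmp [a01 [a0M [a11 [a1M [ca0 ca1]]]]]]]]]]] pi_act.
have arW : arD (restr pi W) `<=` arD P by move=> a [].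
have ends := P2.1.1.
split; first exact: restr_2space.
split; first by move=> p x [op Wp]; split; [exact: a0D | rewrite /= pi_act].
split.
  move=> a g [aa [Ws Wt]]; have [sa ta] := a1E a g aa; have [? ?] := ends a aa.
  by split; [exact: a1D | rewrite /= sa ta !pi_act].
split; first by move=> a g /arW; exact: a1E.
split; first by move=> p x [op _]; exact: a1id.
split; first by move=> a b g h [/arW ? [/arW ? ?]]; apply: a1cmp.
split; first by move=> p [op _]; exact: a01.
split; first by move=> p x y [op _]; exact: a0M.
split; first by move=> a /arW; exact: a11.
split; first by move=> a g h /arW; exact: a1M.
split; first by apply: continuous_subspaceW ca0 => q [[]].
by apply: continuous_subspaceW ca1 => q [[]].
Qed.

End Restriction.

Lemma trivG_G2space (G : top2group) (X : topologicalType) (W : set X) :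
  is_top2group G -> is_G2space (trivG G W).
Proof.
move=> HG; have [[_ [_ [_ [_ [idE [cmpE [assoc [unit inv]]]]]]]] _] := HG.
split.
  split; last first.
    split; first by within_continuity HG.
    split; first by within_continuity HG.
    split; first by within_continuity HG.
    split; last by within_continuity HG.
    apply: within_continuous_pair; first by within_continuity HG.
    apply: (within_continuous_gcomp HG); try by within_continuity HG.
    by move=> [[v g] [w h]] /= [_ [_ [_ gh]]].
  split; first by move=> [v g] [Wv _].
  split; first by move=> [v x] [Wv _].
  split; first by move=> [v g] [w h] /= [[Wv _] _].
  split; first by move=> [v g] [Wv _].
  split; first by move=> [v x] /= _; have [-> ->] := idE x I.
  split.
    move=> [v g] [w h] /= [_ [_ [<- gh]]].
    by have [-> ->] := cmpE g h (conj I (conj I gh)).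
  split.
    move=> [v g] [w h] [z m] /= [_ [_ [_ gh]]] [_ [_ [_ hm]]].
    by rewrite assoc //; split => //; split.
  split; first by move=> [v g] /= _; have [-> ->] := unit g I.
  by move=> [v g] /= _; have [-> [-> [-> ->]]] := inv g I.
split; first by move=> [v x] y [Wv _].
split; first by move=> [v g] h [Wv _].
split; first by move=> [v g] h /= _; rewrite (gsrcM HG) (gtgtM HG).
split; first by move=> [v x] y /= _; rewrite (gidM HG).
split; first by move=> [v a] [w b] g h /= [_ [_ [_ ab]]] gh; rewrite (gcomp_interchange HG).
split; first by move=> [v x] /= _; rewrite mulg1.
split; first by move=> [v x] y z /= _; rewrite mulgA.
split; first by move=> [v g] /= _; rewrite mulg1.
split; first by move=> [v g] y z /= _; rewrite mulgA.
by split; within_continuity HG.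
Qed.

Section CocycleSpace.
Variable G : top2group.
Hypothesis HG : is_top2group G.
Variables (X : topologicalType) (I : choiceType) (U : I -> set X)
  (xx : I -> I -> X -> G0 G) (ee : I -> I -> I -> X -> G1 G).
Hypothesis HC : is_cech_cocycle U xx ee.
Local Notation s := (@gsrc G).
Local Notation t := (@gtgt G).
Local Notation u := (@gid G).
Local Notation c := (@gcomp G).
Local Notation P := (Pc U xx ee).

Lemma within_continuous_xx {T : topologicalType} (A : set T) i j (f : T -> X) :
  (forall y, A y -> U i (f y) /\ U j (f y)) -> {within A, continuous f} ->
  {within A, continuous (fun y => xx i j (f y))}.
Proof.
move=> Af cf; apply: within_continuous_comp_into cf _ _; last by case: HC.
by move=> y /Af.
Qed.

Lemma within_continuous_ee {T : topologicalType} (A : set T) i j k (f : T -> X) :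
  (forall y, A y -> [/\ U i (f y), U j (f y) & U k (f y)]) -> {within A, continuous f} ->
  {within A, continuous (fun y => ee i j k (f y))}.
Proof.
move=> Af cf; apply: within_continuous_comp_into cf _ _; last by case: HC => _ [].
by move=> y /Af [].
Qed.

Lemma Pc_groupoid :
  groupoid_ax (obD P) (arD P) (@src P) (@tgt P) (@idn P) (@cmp P) (@ainv P).
Proof.
split; first by move=> [[[i j] v] g] /= [Ui Uj].
split; first by move=> [[i v] x] /= Ui.
split.
  by move=> [[[i j] v] g] [[[j' k] v'] h] /= [[Ui Uj] [[Uj' Uk]]] [? ? _]; subst j' v'.
split; first by move=> [[[i j] v] g] /= [Ui Uj].
split.
  move=> [[i v] x] /= Ui.
  by rewrite (Pc_gsrc_id HG HC Ui) (Pc_gtgt_id HG HC Ui).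
split.
  move=> [[[i j] v] g] [[[j' k] v'] h] /= [[Ui Uj] [[Uj' Uk]]] [? ? gh]; subst j' v'.
  by rewrite (Pc_gsrc_comp HG HC Ui Uj Uk gh) (Pc_gtgt_comp HG HC Ui Uj Uk gh).
split.
  move=> [[[i j] v] g] [[[j' k] v'] h] [[[k' l] v''] m] /=.
  move=> [[Ui Uj] [[Uj' Uk]]] [? ? gh] [_ [[Uk' Ul]]] [? ? hm]; subst j' v' k' v''.
  by rewrite (Pc_comp_assoc HG HC Ui Uj Uk Ul gh hm).
split.
  move=> [[[i j] v] g] /= [Ui Uj].
  by rewrite (Pc_comp_idl HG HC Ui Uj) (Pc_comp_idr HG HC Ui Uj).
move=> [[[i j] v] g] /= [Ui Uj].
by rewrite (Pc_gsrc_inv HG HC Ui Uj) (Pc_gtgt_inv HG HC Ui Uj)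
  (Pc_comp_invr HG HC Ui Uj) (Pc_comp_invl HG HC Ui Uj).
Qed.

Lemma Pc_ob_sheet_continuous : continuous (fun o : Ob P => o.1.1).
Proof. by apply/continuous_subspace_setT; within_continuity HG. Qed.

Lemma Pc_ar_sheet_continuous : continuous (fun a : Ar P => a.1.1).
Proof. by apply/continuous_subspace_setT; within_continuity HG. Qed.

Lemma Pc_src_continuous : {within arD P, continuous (@src P)}.
Proof.
apply: (within_continuous_fibrewise Pc_ar_sheet_continuous
  (F := fun ij a => ((ij.1, a.1.2), s a.2) : Ob P)) => // -[i j].
by within_continuity HG.
Qed.

Lemma Pc_tgt_continuous : {within arD P, continuous (@tgt P)}.
Proof.
apply: (within_continuous_fibrewise Pc_ar_sheet_continuous
  (F := fun ij a => ((ij.2, a.1.2), (xx ij.1 ij.2 a.1.2)^-1 * t a.2) : Ob P)) => // -[i j].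
within_continuity HG; apply: within_continuous_xx; last by within_continuity HG.
by move=> [[[i' j'] v] g] [/= [Ui Uj] [? ?]]; subst.
Qed.

Lemma Pc_idn_continuous : {within obD P, continuous (@idn P)}.
Proof.
apply: (within_continuous_fibrewise Pc_ob_sheet_continuous
  (F := fun i o => (((i, i), o.1.2), (ee i i i o.1.2)^-1 * u o.2) : Ar P)) => // i.
within_continuity HG; apply: within_continuous_ee; last by within_continuity HG.
by move=> [[i' v] x] [/= Ui <-].
Qed.

Lemma Pc_cmp_continuous : {within composable (arD P) (@src P) (@tgt P),
  continuous (fun p : Ar P * Ar P => cmp p.1 p.2)}.
Proof.
apply: (within_continuous_fibres (k := fun p : Ar P * Ar P => p.1.1.1)).
  by apply/continuous_subspace_setT; within_continuity HG.
move=> [i j].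
apply: (within_continuous_fibrewise (k := fun p : Ar P * Ar P => p.2.1.1)
  (F := fun jk p => (((i, jk.2), p.1.1.2),
          ee i j jk.2 p.1.1.2 * c p.1.2 (u (xx i j p.1.1.2) * p.2.2)) : Ar P)).
- by apply/continuous_subspace_setT; within_continuity HG.
- by move=> [[[[i1 j1] v1] g1] [[[j2 k2] v2] h2]] /= [_ [-> ->]].
move=> [j' k].
have sheets y : (composable (arD P) (@src P) (@tgt P)
    `&` [set y | y.1.1.1 = (i, j)] `&` [set y | y.2.1.1 = (j', k)]) y ->
    [/\ U i y.1.1.2, U j y.1.1.2, U k y.1.1.2 &
     t y.1.2 = s (u (xx i j y.1.1.2) * y.2.2)].
  move: y => [[[[i1 j1] v1] g1] [[[j2 k2] v2] h2]] /=.
  move=> [[[[Ui Uj] [[Uj' Uk] gh]] [? ?]] [? ?]].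
  case: gh => ? ? gh; subst; split => //.
  by rewrite (gsrcM HG) (gsrc_gid HG) -gh mulVKg.
within_continuity HG.
  apply: within_continuous_ee; last by within_continuity HG.
  by move=> y /sheets [].
apply: (within_continuous_gcomp HG); first by within_continuity HG.
  within_continuity HG; apply: within_continuous_xx; last by within_continuity HG.
  by move=> y /sheets [].
by move=> y /sheets [].
Qed.

Lemma Pc_inv_continuous : {within arD P, continuous (@ainv P)}.
Proof.
apply: (within_continuous_fibrewise Pc_ar_sheet_continuous
  (F := fun ij a => (((ij.2, ij.1), a.1.2), u (xx ij.1 ij.2 a.1.2)^-1 *
      (ee ij.1 ij.2 ij.1 a.1.2)^-1 * (ee ij.1 ij.1 ij.1 a.1.2)^-1 * ginv a.2) : Ar P))
  => // -[i j].
have sheet a : (arD P `&` [set a | a.1.1 = (i, j)]) a -> U i a.1.2 /\ U j a.1.2.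
  by move: a => [[[i' j'] v] g] [/= [Ui Uj] [? ?]]; subst.
within_continuity HG.
- apply: within_continuous_xx; last by within_continuity HG.
  by move=> a /sheet.
- apply: within_continuous_ee; last by within_continuity HG.
  by move=> a /sheet [].
- apply: within_continuous_ee; last by within_continuity HG.
  by move=> a /sheet [].
Qed.

Lemma Pc_G2space : is_G2space P.
Proof.
split.
  split; first exact: Pc_groupoid.
  by split; [exact: Pc_src_continuous | split; [exact: Pc_tgt_continuous |
    split; [exact: Pc_idn_continuous | split; [exact: Pc_cmp_continuous |
    exact: Pc_inv_continuous]]]].
split; first by move=> [[i v] y] x.
split; first by move=> [[[i j] v] g] h.
split; first by move=> [[[i j] v] g] h /= _; rewrite (gsrcM HG) (gtgtM HG) mulgA.
split; first by move=> [[i v] y] x /= _; rewrite (gidM HG) mulgA.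
split.
  move=> [[[i j] v] a] [[[j' k] v'] b] g h /= [_ [_ [? ? ab]]] gh; subst.
  by rewrite (gcomp_act HG _ ab gh).
split; first by move=> [[i v] y] /= _; rewrite mulg1.
split; first by move=> [[i v] y] x z /= _; rewrite mulgA.
split; first by move=> [[[i j] v] g] /= _; rewrite mulg1.
split; first by move=> [[[i j] v] g] x z /= _; rewrite mulgA.
by split; within_continuity HG.
Qed.

Lemma pic_cfunctor : is_cfunctor (pic U xx ee).
Proof.
split=> //; split=> //; split; first by move=> [[[i j] v] g].
split; first by move=> [[i v] x].
split; first by move=> [[[i j] v] g] [[[j' k] v'] h] /= [_ [_ [? ? _]]].
by split; within_continuity HG.
Qed.

End CocycleSpace.

Section Chart.
Variable G : top2group.
Hypothesis HG : is_top2group G.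
Variables (X : topologicalType) (I : choiceType) (U : I -> set X)
  (xx : I -> I -> X -> G0 G) (ee : I -> I -> I -> X -> G1 G).
Hypothesis HC : is_cech_cocycle U xx ee.
Variable i : I.
Local Notation u := (@gid G).
Local Notation P := (Pc U xx ee).
Local Notation R := (restr (pic U xx ee) (U i)).
Local Notation Q := (trivG G (U i)).

Definition chart_psi : fn2 R Q := @Fn2 R Q
  (fun o : Ob P => (o.1.2, xx i o.1.1 o.1.2 * o.2) : X * G0 G)
  (fun a : Ar P => (a.1.2, ee i a.1.1.1 a.1.1.2 a.1.2 * u (xx i a.1.1.1 a.1.2) * a.2)
     : X * G1 G).

Definition chart_phi : fn2 Q R := @Fn2 Q R
  (fun q : X * G0 G => ((i, q.1), q.2) : Ob P)
  (fun b : X * G1 G => (((i, i), b.1), (ee i i i b.1)^-1 * b.2) : Ar P).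

Definition chart_eps (o : Ob P) : Ar P :=
  (((i, o.1.1), o.1.2), u (xx i o.1.1 o.1.2 * o.2)).

Definition chart_eta (q : X * G0 G) : X * G1 G :=
  (q.1, (ee i i i q.1)^-1 * u q.2).

Lemma chart_psi_ob_continuous : {within obD R, continuous (fob chart_psi)}.
Proof.
apply: (within_continuous_fibrewise (@Pc_ob_sheet_continuous _ _ _ U xx ee)
  (F := fun k o => (o.1.2, xx i k o.1.2 * o.2) : X * G0 G)) => // k.
within_continuity HG; apply: (within_continuous_xx HC); last by within_continuity HG.
by move=> [[k' v] x] [/= [Uk Ui] ?]; subst.
Qed.

Lemma chart_psi_ar_continuous : {within arD R, continuous (far chart_psi)}.
Proof.
apply: (within_continuous_fibrewise (@Pc_ar_sheet_continuous _ _ _ U xx ee)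
  (F := fun kl a => (a.1.2, ee i kl.1 kl.2 a.1.2 * u (xx i kl.1 a.1.2) * a.2)
     : X * G1 G)) => // -[k l].
have sheet a : (arD R `&` [set a | a.1.1 = (k, l)]) a ->
    [/\ U i a.1.2, U k a.1.2 & U l a.1.2].
  by move: a => [[[k' l'] v] g] [/= [[Uk Ul] [Ui _]] [? ?]]; subst.
within_continuity HG.
  by apply: (within_continuous_ee HC); last by within_continuity HG.
apply: (within_continuous_xx HC); last by within_continuity HG.
by move=> a /sheet [].
Qed.

Lemma chart_psi_Gfunctor : is_Gfunctor chart_psi.
Proof.
split; last first.
  split; first by move=> [[k v] y] x _ /=; rewrite mulgA.
  by move=> [[[k l] v] g] h _ /=; rewrite mulgA.
split; first by move=> [[k v] x] /= [Uk Ui].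
split; first by move=> [[[k l] v] g] /= [[Uk Ul] [Ui _]].
split.
  move=> [[[k l] v] g] /= [[Uk Ul] [Ui _]].
  by rewrite (chart_gsrc HG HC Ui Uk Ul) (chart_gtgt HG HC Ui Uk Ul).
split; first by move=> [[k v] x] /= [Uk Ui]; rewrite (chart_id HG HC Ui Uk).
split.
  move=> [[[k l] v] g] [[[l' m] v'] h] /= [[[Uk Ul] [Ui _]] [[[_ Um] _] [? ? gh]]]; subst.
  by rewrite (chart_comp HG HC Ui Uk Ul Um gh).
by split; [exact: chart_psi_ob_continuous | exact: chart_psi_ar_continuous].
Qed.

Lemma chart_phi_Gfunctor : is_Gfunctor chart_phi.
Proof.
split; last first.
  split; first by move=> [v y] x _ /=.
  by move=> [v g] h _ /=; rewrite mulgA.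
split; first by move=> [v x] /= [Uv _].
split; first by move=> [v g] /= [Uv _].
split.
  move=> [v g] /= [Uv _].
  by rewrite (gsrcM HG) (gsrcV HG) (cocycle_gsrc HC Uv Uv Uv) (gtgtM HG) (gtgtV HG)
    (cocycle_xii HC Uv) invg1 mul1g mulKg.
split; first by move=> [v x] /= [Uv _].
split.
  move=> [v g] [w h] /= [[Uv _] [_ [? gh]]]; subst.
  by rewrite (chart_phi_comp HG HC Uv gh).
split; within_continuity HG.
apply: (within_continuous_ee HC); last by within_continuity HG.
by move=> [v g] [/= Uv _].
Qed.

Lemma chart_eps_natiso : is_natiso (fcomp chart_psi chart_phi) (fid R) chart_eps.
Proof.
split.
  move=> [[k v] x] /= [Uk Ui].
  by rewrite (gsrc_gid HG) (gtgt_gid HG) mulKg.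
split.
  move=> [[[k l] v] g] /= [[Uk Ul] [Ui _]].
  by rewrite (chart_eps_natural HG HC _ Ui Uk Ul).
apply: (within_continuous_fibrewise (@Pc_ob_sheet_continuous _ _ _ U xx ee)
  (F := fun k o => (((i, k), o.1.2), u (xx i k o.1.2 * o.2)) : Ar P)) => // k.
within_continuity HG; apply: (within_continuous_xx HC); last by within_continuity HG.
by move=> [[k' v] x] [/= [Uk Ui] ?]; subst.
Qed.

Lemma chart_eps_equivariant : is_G0equivariant (P:=R) (Q:=R) chart_eps.
Proof.
by move=> [[k v] x] y _ /=; rewrite /chart_eps /= mulgA (gidM HG (xx i k v * x) y).
Qed.

Lemma chart_eta_natiso : is_natiso (fid Q) (fcomp chart_phi chart_psi) chart_eta.
Proof.
split.
  move=> [v x] /= [Uv _].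
  by rewrite (Pc_gsrc_id HG HC Uv) (gtgtM HG) (gtgtV HG) (cocycle_xii HC Uv) (gtgt_gid HG).
split; first by move=> [v g] /= [Uv _]; rewrite (chart_eta_natural HG HC Uv).
within_continuity HG; apply: (within_continuous_ee HC); last by within_continuity HG.
by move=> [v x] [/= Uv _].
Qed.

Lemma chart_eta_equivariant : is_G0equivariant (P:=Q) (Q:=Q) chart_eta.
Proof. by move=> [v x] y _ /=; rewrite /chart_eta /= (gidM HG) mulgA. Qed.

Lemma Pc_chart : open (U i) -> is_chart chart_psi chart_phi chart_eps.
Proof.
move=> oUi.
have pseudo_inverse : is_Gpseudo_inverse chart_psi chart_phi.
  split; first exact: chart_phi_Gfunctor.
  by exists chart_eps, chart_eta; split; [exact: chart_eps_natiso |
    split; [exact: chart_eps_equivariant |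
    split; [exact: chart_eta_natiso | exact: chart_eta_equivariant]]].
split=> //; split; first by apply: restr_G2space; [exact: Pc_G2space | by []].
split; first exact: trivG_G2space.
split; first by split; [exact: chart_psi_Gfunctor | exists chart_phi].
split=> //; split; first exact: chart_eps_natiso.
by split; [exact: chart_eps_equivariant | split].
Qed.

End Chart.

Unset Implicit Arguments.
Set Strict Implicit.

Theorem lemma5 (G : top2group) (X : topologicalType) (I : choiceType)
  (U : I -> set X) (xx : I -> I -> X -> G0 G) (ee : I -> I -> I -> X -> G1 G) :
  is_top2group G ->
  (forall i, open (U i)) -> (forall x : X, exists i, U i x) ->
  is_cech_cocycle U xx ee ->
  is_principal_bundle (pic U xx ee) /\ is_trivializing_cover (pic U xx ee) U.
Proof.
move=> HG oU cover HC.
have atlas : is_trivializing_cover (pic U xx ee) U.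
  split=> // i; have chart := Pc_chart HG HC (oU i).
  by do 3 eexists; exact: chart.
split=> //; split; first exact: Pc_G2space.
by split; [exact: pic_cfunctor | exists I, U].
Qed.
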